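(* Let $\mathcal F$ be a finite-dimensional linear subspace of $C(\mathbf X)$ equipped with a norm $\|\cdot\|_{\mathcal F}$, and let $L\ge1$ be such that $\mathcal H_\epsilon(U_{\mathcal F})\le L\log\frac1\epsilon$ for all $\epsilon\in(0,1/2]$. There exists a strategy for Predictor that guarantees, for all $N=2,3,\dots$, all $F\in\mathcal F$ and all moves of Reality, $$\sum_{n=1}^N(y_n-\mu_n)^2\le\sum_{n=1}^N(y_n-F(x_n))^2+CL\left(\log^+\|F\|_{\mathcal F}+\log N\right),$$ where $C$ is a universal constant.
   Context: Protocol: $\mathbf X$ a nonempty topological space; at each round $n$ Reality announces $x_n\in\mathbf X$, Predictor announces $\mu_n\in\mathbb R$, Reality announces $y_n\in[-1,1]$; a strategy for Predictor maps each history $(x_1,y_1,\dots,x_{n-1},y_{n-1},x_n)$ to $\mu_n$. $C(\mathbf X)$: bounded continuous real functions on $\mathbf X$ with supremum norm. $U_{\mathcal F}=\{F\in\mathcal F:\|F\|_{\mathcal F}\le1\}$. $\mathcal H_\epsilon(A)$: $\log_2$ of the minimal number of points of $A$ forming an $\epsilon$-net for $A$ in the supremum metric. $\log=\log_2$, and $\log^+t=\log t$ for $t\ge1$, $\log^+t=0$ otherwise. *)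

From HB Require Import structures.
From mathcomp Require Import all_boot all_order all_algebra.
From mathcomp Require Import all_classical all_reals all_analysis.
From mathcomp Require Import Rstruct Rstruct_topology.
From Stdlib Require Import Rdefinitions.
Set Implicit Arguments. Unset Strict Implicit. Unset Printing Implicit Defensive.
Import Order.TTheory GRing.Theory Num.Theory.
Local Open Scope classical_set_scope.
Local Open Scope ring_scope.

Definition log2 (t : R) : R := ln t / ln 2.
Definition logp (t : R) : R := if 1 <= t then log2 t else 0.

Section FunSpace.
Variable X : topologicalType.

Definition CX (f : X -> R) : Prop :=
  continuous f /\ exists M : R, forall x, `|f x| <= M.

Definition lin_subspace_CX (F : set (X -> R)) : Prop :=
  F `<=` CX /\ F (fun _ => 0) /\
  (forall f g, F f -> F g -> F (fun x => f x + g x)) /\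
  (forall (a : R) f, F f -> F (fun x => a * f x)).

Definition finite_dim (F : set (X -> R)) : Prop :=
  exists (n : nat) (b : 'I_n -> X -> R), (forall i, F (b i)) /\
    forall f, F f -> exists c : 'I_n -> R, f = fun x => \sum_(i < n) c i * b i x.

Definition is_norm_on (F : set (X -> R)) (nF : (X -> R) -> R) : Prop :=
  (forall f, F f -> 0 <= nF f) /\
  (forall f, F f -> nF f = 0 -> f = (fun _ => 0)) /\
  (forall (a : R) f, F f -> nF (fun x => a * f x) = `|a| * nF f) /\
  (forall f g, F f -> F g -> nF (fun x => f x + g x) <= nF f + nF g).

Definition unit_ball (F : set (X -> R)) (nF : (X -> R) -> R) : set (X -> R) :=
  [set f | F f /\ nF f <= 1].

(* g_0,...,g_{k-1}, points of A, form an eps-net for A in the supremum metric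
   (sup_x |f x - g x| <= eps is written pointwise) *)
Definition has_net (A : set (X -> R)) (eps : R) (k : nat) : Prop :=
  exists g : 'I_k -> X -> R, (forall i, A (g i)) /\
    forall f, A f -> exists i, forall x, `|f x - g i x| <= eps.

Definition covering_number (A : set (X -> R)) (eps : R) (k : nat) : Prop :=
  has_net A eps k /\ forall j, has_net A eps j -> leq k j.

Definition metric_entropy_is (A : set (X -> R)) (eps h : R) : Prop :=
  exists k, covering_number A eps k /\ h = log2 k%:R.

Definition strategy := seq (X * R) -> X -> R.

(* Predictor's move at (0-based) round n, given Reality's moves xs, ys *)
Definition pred_move (S : strategy) (xs : nat -> X) (ys : nat -> R) (n : nat) : R :=
  S [seq (xs i, ys i) | i <- iota 0 n] (xs n).

End FunSpace.

(* The strategy is Vovk's aggregating algorithm for the square loss, run over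
   a countable pool of experts: at scale j, the clipped rescalings
   clip (2^(j+1) g) of the k_j functions g of a 4^-(j+1)-net of the unit ball,
   each with prior weight 2^-(j+1) / k_j.  Since a |-> exp (-(y - a)^2 / 16) is
   concave on [-1, 1], at each round the potential sum prior * exp (- loss / 16)
   is multiplied by at most exp (- loss of the aggregate / 16), so the
   aggregate loses at most 16 ln (1 / prior) + 4 j more than an expert of
   scale j (4 j for the rounds before it joins).  Given F, pick j with
   ||F|| <= 2^(j+1) and N <= 2^(j+1): F / 2^(j+1) lies in the unit ball, so one
   expert of scale j loses at most 4 more than F over N rounds, while the
   entropy bound gives ln k_j <= 2 (j+1) L ln 2, and
   j + 1 <= 2 + log N + log^+ ||F||. *)

From HB Require Import structures.
From mathcomp Require Import all_boot all_order all_algebra.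
From mathcomp Require Import all_classical all_reals all_analysis.
From mathcomp Require Import Rstruct Rstruct_topology.
From Stdlib Require Import Rdefinitions.
From mathcomp Require Import ring lra.

Set Implicit Arguments.
Unset Strict Implicit.
Unset Printing Implicit Defensive.

Import Order.TTheory GRing.Theory Num.Theory.
Local Open Scope ring_scope.

Lemma expR_le_inv (w q : R) : 0 < q -> q <= expR (- w) -> expR w <= q^-1.
Proof. by move=> q0 hq; rewrite -[expR w]invrK -expRN lef_pV2 ?posrE ?expR_gt0. Qed.

Lemma expR_subr_sqr_le1D (z : R) : -1/8 <= z -> expR (z - z ^+ 2) <= 1 + z.
Proof.
move=> z_ge; have [z0|z0] := leP 0 z.
  have q0 : 0 < 1 - (z - z ^+ 2) by nra.
  apply: le_trans (expR_le_inv q0 _) _; first by have := expR_ge1Dx (- (z - z ^+ 2)); lra.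
  by rewrite -[X in X <= _]mul1r ler_pdivrMr //; nra.
set t := z ^+ 2 - z.
have t0 : 0 <= t by rewrite /t; nra.
have q0 : 0 < (1 + t / 2) ^+ 2 by nra.
apply: le_trans (expR_le_inv q0 _) _.
  have -> : - (z - z ^+ 2) = t / 2 + t / 2 by rewrite /t; field.
  by rewrite exp.expRD -expr2 lerXn2r ?nnegrE ?expR_ge1Dx //; lra.
by rewrite -[X in X <= _]mul1r ler_pdivrMr // /t; nra.
Qed.

Lemma sqr_diff_le4 (u v : R) : -1 <= u <= 1 -> -1 <= v <= 1 -> (u - v) ^+ 2 <= 4.
Proof. by move=> /andP[? ?] /andP[? ?]; nra. Qed.

(* Concavity of a |-> expR (- (y - a)^2 / 16) on [-1, 1]: the right-hand side
   is its tangent line at mu. *)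
Lemma expR_sqr_loss_tangent (y a mu : R) :
  -1 <= y <= 1 -> -1 <= a <= 1 -> -1 <= mu <= 1 ->
  expR (- (1/16) * (y - a) ^+ 2) <=
  expR (- (1/16) * (y - mu) ^+ 2) * (1 + (1/8) * (y - mu) * (a - mu)).
Proof.
move=> y1 a1 mu1; set z := (1/8) * (y - mu) * (a - mu).
have -> : - (1/16) * (y - a) ^+ 2 = - (1/16) * (y - mu) ^+ 2 + (z - (a - mu) ^+ 2 / 16).
  by rewrite /z; field.
rewrite exp.expRD ler_pM2l ?expR_gt0 //.
have ya := sqr_diff_le4 y1 a1; have ymu := sqr_diff_le4 y1 mu1.
have z_ge : -1/8 <= z.
  have -> : z = ((mu - (y + a) / 2) ^+ 2 - (y - a) ^+ 2 / 4) / 8 by rewrite /z; field.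
  by have := sqr_ge0 (mu - (y + a) / 2); lra.
apply: le_trans (expR_subr_sqr_le1D z_ge); rewrite ler_expR.
have : z ^+ 2 <= (a - mu) ^+ 2 / 16.
  have -> : z ^+ 2 = (y - mu) ^+ 2 * (a - mu) ^+ 2 / 64 by rewrite /z; field.
  by have := sqr_ge0 (a - mu); nra.
lra.
Qed.

Section WeightedAverage.
Variables (I : Type) (r : seq I) (p a : I -> R).
Hypotheses (p_ge0 : forall e, 0 <= p e) (a_bound : forall e, -1 <= a e <= 1).
Let P := \sum_(e <- r) p e.
Let mu := (\sum_(e <- r) p e * a e) / P.

Lemma weighted_average_bound : 0 < P -> -1 <= mu <= 1.
Proof.
move=> P_gt0.
have le_P : \sum_(e <- r) p e * a e <= P.
  by apply: ler_sum => e _; have := p_ge0 e; have /andP[? ?] := a_bound e; nra.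
have ge_P : - P <= \sum_(e <- r) p e * a e.
  by rewrite -sumrN; apply: ler_sum => e _; have := p_ge0 e; have /andP[? ?] := a_bound e; nra.
by rewrite /mu ler_pdivrMr // ler_pdivlMr //; apply/andP; split; lra.
Qed.

(* Jensen's inequality for the concave function of [expR_sqr_loss_tangent]. *)
Lemma expR_sqr_loss_mixture (y : R) : -1 <= y <= 1 -> 0 < P ->
  \sum_(e <- r) p e * expR (- (1/16) * (y - a e) ^+ 2) <=
  P * expR (- (1/16) * (y - mu) ^+ 2).
Proof.
move=> y1 P_gt0; have mu1 := weighted_average_bound P_gt0.
set E := expR (- (1/16) * (y - mu) ^+ 2); set c := (1/8) * (y - mu).
apply: (le_trans (y := \sum_(e <- r) (E * (1 - c * mu) * p e + E * c * (p e * a e)))).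
  apply: ler_sum => e _.
  have -> : E * (1 - c * mu) * p e + E * c * (p e * a e) =
            p e * (E * (1 + (1/8) * (y - mu) * (a e - mu))) by rewrite /c; ring.
  exact/ler_wpM2l/expR_sqr_loss_tangent.
rewrite big_split /= -!mulr_sumr -/P.
have -> : \sum_(e <- r) p e * a e = mu * P by rewrite /mu mulfVK ?gt_eqF.
suff -> : E * (1 - c * mu) * P + E * c * (mu * P) = P * E by [].
by ring.
Qed.

End WeightedAverage.

Lemma ler_sum_mem (I : eqType) (r : seq I) (F : I -> R) (x : I) :
  (forall e, 0 <= F e) -> x \in r -> F x <= \sum_(e <- r) F e.
Proof.
move=> F_ge0; elim: r => // e r IH; rewrite in_cons big_cons => /orP[/eqP->|/IH].
  by rewrite lerDl sumr_ge0.
by move=> le_r; rewrite -[F x]add0r lerD.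
Qed.

Definition clip (t : R) := Num.max (-1) (Num.min 1 t).

Lemma clip_cases (t : R) :
  [\/ t <= -1 /\ clip t = -1, 1 <= t /\ clip t = 1 | -1 <= t <= 1 /\ clip t = t].
Proof.
rewrite /clip minEle maxEle; have [t1|t1] := leP 1 t.
  by apply: Or32; split=> //; case: lerP; lra.
have [t_1|t_1] := leP t (-1).
  by apply: Or31; split=> //; case: lerP; lra.
by apply: Or33; split; [apply/andP; split | case: lerP]; lra.
Qed.

Lemma clip_bound (t : R) : -1 <= clip t <= 1.
Proof. by case: (clip_cases t) => [[_ ->]|[_ ->]|[t1 ->]] //; lra. Qed.

Lemma clip_sqr_loss (y a b : R) : -1 <= y <= 1 ->
  (y - clip a) ^+ 2 <= (y - b) ^+ 2 + 4 * `|a - b|.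
Proof.
move=> /andP[y_ge y_le]; have ab := ler_norm (a - b).
have ba := ler_norm (b - a); rewrite distrC in ba.
by case: (clip_cases a) => [[? ->]|[? ->]|[/andP[? ?] ->]];
  case: (clip_cases b) => [[? _]|[? _]|[/andP[? ?] _]]; nra.
Qed.

Section Aggregation.
Variable X : Type.
Variables (k : nat -> nat) (expert : nat -> nat -> X -> R).
Hypotheses (k_gt0 : forall j, (0 < k j)%nat)
           (expert_bound : forall j i x, -1 <= expert j i x <= 1).
Variables (xs : nat -> X) (ys : nat -> R).

Definition experts (m : nat) : seq (nat * nat) :=
  [seq (j, i) | j <- iota 0 m, i <- iota 0 (k j)].
Arguments experts m : simpl never.

Definition prior (e : nat * nat) := (2 ^+ e.1.+1 * ((k e.1)%:R : R))^-1.

(* An expert of scale j enters the game at round j; before that it is charged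
   the maximal loss 4, so that the aggregate at round n involves only the
   finitely many experts of scale at most n. *)
Definition round_loss (t : nat) (e : nat * nat) :=
  if (t < e.1)%nat then 4 else (ys t - expert e.1 e.2 (xs t)) ^+ 2.

Definition weight (n : nat) (e : nat * nat) :=
  prior e * expR (- (1/16) * \sum_(t < n) round_loss t e).

Definition aggregate (n : nat) (x : X) :=
  (\sum_(e <- experts n.+1) weight n e * expert e.1 e.2 x) /
  \sum_(e <- experts n.+1) weight n e.

Definition potential (m n : nat) := \sum_(e <- experts m) weight n e.

Lemma mem_experts m j i : (j < m)%nat -> (i < k j)%nat -> (j, i) \in experts m.
Proof. by move=> jm ik; apply: allpairs_f_dep; rewrite mem_iota. Qed.

Lemma experts_addn m1 m2 : experts (m1 + m2) =
  experts m1 ++ [seq (j, i) | j <- iota m1 m2, i <- iota 0 (k j)].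
Proof. by rewrite /experts iotaD allpairs_cat. Qed.

Lemma weight_gt0 n e : 0 < weight n e.
Proof.
by rewrite mulr_gt0 ?expR_gt0 // invr_gt0 mulr_gt0 ?exprn_gt0 ?ltr0n.
Qed.

Lemma potential_gt0 n : 0 < potential n.+1 n.
Proof.
apply: lt_le_trans (weight_gt0 n (0, 0)%nat) _.
by apply: ler_sum_mem; [move=> e; exact: ltW (weight_gt0 n e) | exact: mem_experts].
Qed.

Lemma aggregate_bound n x : -1 <= aggregate n x <= 1.
Proof.
by apply: weighted_average_bound (potential_gt0 n) => e; [exact: ltW (weight_gt0 n e)|].
Qed.

Lemma weightS n e :
  weight n.+1 e = weight n e * expR (- (1/16) * round_loss n e).
Proof. by rewrite /weight big_ord_recr /= mulrDr exp.expRD mulrA. Qed.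

Lemma potentialS m n : (forall t, -1 <= ys t <= 1) -> (n < m)%nat ->
  potential m n.+1 <= potential m n * expR (- (1/16) * (ys n - aggregate n (xs n)) ^+ 2).
Proof.
move=> ys_bound nm; set E := expR _.
have active :
    \sum_(e <- experts n.+1) weight n.+1 e <= (\sum_(e <- experts n.+1) weight n e) * E.
  have -> : \sum_(e <- experts n.+1) weight n.+1 e =
            \sum_(e <- experts n.+1)
              weight n e * expR (- (1/16) * (ys n - expert e.1 e.2 (xs n)) ^+ 2).
    apply: eq_big_seq => e /allpairsPdep[j [i [/[!mem_iota] /= jn _ ->]]].
    by rewrite weightS /round_loss /= ltnNge -ltnS jn.
  apply: expR_sqr_loss_mixture => [e|e||].
  - exact: ltW (weight_gt0 n e).
  - exact: expert_bound.
  - exact: ys_bound.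
  - exact: potential_gt0.
pose later := [seq (j, i) | j <- iota n.+1 (m - n.+1), i <- iota 0 (k j)].
have inactive : \sum_(e <- later) weight n.+1 e <= (\sum_(e <- later) weight n e) * E.
  rewrite big_distrl /= !big_seq.
  apply: ler_sum => e /allpairsPdep[j [i [/[!mem_iota] /andP[nj _] _ ->]]].
  rewrite weightS /round_loss /= nj ler_wpM2l ?(ltW (weight_gt0 _ _)) // ler_expR.
  by have := sqr_diff_le4 (ys_bound n) (aggregate_bound n (xs n)); lra.
rewrite /potential -(subnKC nm) experts_addn !(@big_cat _ _ _ _ (experts n.+1)).
by rewrite mulrDl; exact: lerD.
Qed.

Lemma potential_le_exp_loss m n : (forall t, -1 <= ys t <= 1) -> (n <= m)%nat ->
  potential m n <=
  potential m 0 * expR (- (1/16) * \sum_(t < n) (ys t - aggregate t (xs t)) ^+ 2).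
Proof.
move=> ys_bound; elim: n => [|n IH] nm; first by rewrite big_ord0 mulr0 exp.expR0 mulr1.
apply: le_trans (potentialS ys_bound nm) _.
rewrite big_ord_recr /= (mulrDr (- (1/16))) exp.expRD (mulrA (potential m 0)).
by rewrite ler_pM2r ?expR_gt0 // IH // ltnW.
Qed.

Lemma sum_inv_pow2 (F : numFieldType) m :
  \sum_(j <- iota 0 m) (2 ^+ j.+1)^-1 = 1 - (2 ^+ m)^-1 :> F.
Proof.
elim: m => [|m IH]; first by rewrite big_nil expr0 invr1 subrr.
rewrite -addn1 iotaD big_cat IH big_seq1 /= addn1 !exprS.
have : 2 ^+ m != 0 :> F by rewrite expf_neq0.
by move=> ?; field.
Qed.

Lemma potential0_le1 m : potential m 0 <= 1.
Proof.
rewrite /potential /experts big_allpairs_dep /=.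
have -> : \sum_(j <- iota 0 m) \sum_(i <- iota 0 (k j)) weight 0 (j, i) =
          \sum_(j <- iota 0 m) (2 ^+ j.+1)^-1.
  apply: eq_bigr => j _.
  rewrite (eq_bigr (fun=> prior (j, 0%nat))) => [|i _]; last first.
    by rewrite /weight big_ord0 mulr0 exp.expR0 mulr1.
  rewrite (_ : iota 0 (k j) = index_iota 0 (k j)); last by rewrite /index_iota subn0.
  rewrite sumr_const_nat subn0 /prior /= invfM -[_ *+ k j]mulr_natr divfK //.
  by rewrite pnatr_eq0 -lt0n.
by rewrite sum_inv_pow2 lerBlDr lerDl invr_ge0 exprn_ge0.
Qed.

Lemma sum_round_loss_le n j i :
  \sum_(t < n) round_loss t (j, i) <=
  4 * j%:R + \sum_(t < n) (ys t - expert j i (xs t)) ^+ 2.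
Proof.
suff : \sum_(t < n) round_loss t (j, i) <=
       4 * (minn n j)%:R + \sum_(t < n) (ys t - expert j i (xs t)) ^+ 2.
  by move/le_trans; apply; rewrite lerD2r ler_pM2l ?ler_nat ?geq_minr.
elim: n => [|n IH]; first by rewrite !big_ord0 min0n mulr0 addr0.
rewrite !big_ord_recr /= [round_loss n _]/round_loss /=.
have := sqr_ge0 (ys n - expert j i (xs n)).
case: ltnP => [nj|jn]; move: IH.
  by rewrite (minn_idPl nj) (minn_idPl (ltnW nj)) -natr1; lra.
by rewrite (minn_idPr jn) (minn_idPr (leqW jn)); lra.
Qed.

Lemma prior_expR j i : prior (j, i) = expR (- (j.+1%:R * ln 2 + ln (k j)%:R)).
Proof.
by rewrite expRN exp.expRD expRM_natl !lnK ?posrE ?ltr0n // /prior invfM.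
Qed.

Lemma aggregate_regret N j i : (forall t, -1 <= ys t <= 1) -> (i < k j)%nat ->
  \sum_(t < N) (ys t - aggregate t (xs t)) ^+ 2 <=
  \sum_(t < N) (ys t - expert j i (xs t)) ^+ 2 + 4 * j%:R +
  16 * (j.+1%:R * ln 2 + ln (k j)%:R).
Proof.
move=> ys_bound ik; set m := (N + j).+1.
have w_le : weight N (j, i) <=
    expR (- (1/16) * \sum_(t < N) (ys t - aggregate t (xs t)) ^+ 2).
  have jm : (j < m)%nat by rewrite ltnS leq_addl.
  have w_le_potential : weight N (j, i) <= potential m N.
    by apply: ler_sum_mem (mem_experts jm ik) => e; exact: ltW (weight_gt0 N e).
  apply: le_trans w_le_potential (le_trans (potential_le_exp_loss ys_bound _) _).
    by rewrite ltnW // ltnS leq_addr.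
  by rewrite ler_piMl ?expR_ge0 ?potential0_le1.
move: w_le; rewrite /weight prior_expR -exp.expRD ler_expR.
by have := sum_round_loss_le N j i; lra.
Qed.

End Aggregation.

Lemma aggregate_ext (X : Type) k expert (xs xs' : nat -> X) (ys ys' : nat -> R) n x :
  (forall t, (t < n)%nat -> xs t = xs' t /\ ys t = ys' t) ->
  aggregate k expert xs ys n x = aggregate k expert xs' ys' n x.
Proof.
move=> same; have weight_eq e : weight k expert xs ys n e = weight k expert xs' ys' n e.
  rewrite /weight; congr (_ * expR (_ * _)); apply: eq_bigr => t _.
  by rewrite /round_loss; case: (same t (ltn_ord t)) => -> ->.
by rewrite /aggregate; congr (_ / _); apply: eq_bigr => e _; rewrite weight_eq.
Qed.

Definition aggregating_strategy (X : topologicalType) k expert (x0 : X) : strategy X :=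
  fun h => aggregate k expert (fun t => (nth (x0, 0) h t).1)
                              (fun t => (nth (x0, 0) h t).2) (size h).

Lemma pred_move_aggregating (X : topologicalType) k expert (x0 : X) xs ys n :
  pred_move (aggregating_strategy k expert x0) xs ys n = aggregate k expert xs ys n (xs n).
Proof.
rewrite /pred_move /aggregating_strategy size_map size_iota.
by apply: aggregate_ext => t tn; rewrite (nth_map 0%nat) ?size_iota // nth_iota.
Qed.

Lemma log2E (t : R) : log2 t = ln t / ln 2.
Proof. by rewrite /log2 !RealsE. Qed.

Lemma ln2_gt0 : 0 < @ln R 2.
Proof. by apply: ln_gt0; lra. Qed.

Lemma ln2_le1 : @ln R 2 <= 1.
Proof. by have := @le_ln1Dx R 1; rewrite (_ : 1 + 1 = 2) //; apply; lra. Qed.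

Lemma logp_ge0 (t : R) : 0 <= logp t.
Proof.
rewrite /logp; case: ifP => [t1|_] //.
by rewrite log2E divr_ge0 ?ln_ge0 //; lra.
Qed.

Lemma log2_pow2_lt (s : nat) (t : R) : 2 ^+ s < t -> s%:R < log2 t.
Proof.
move=> st; have t_gt0 : 0 < t by apply: lt_trans st; rewrite exprn_gt0.
rewrite log2E ltr_pdivlMr ?ln2_gt0 // mulr_natl -lnXn // ltr_ln // posrE.
by rewrite exprn_gt0.
Qed.

Lemma log2_nat_ge1 N : (2 <= N)%nat -> 1 <= log2 N%:R.
Proof.
move=> N2; rewrite log2E ler_pdivlMr ?ln2_gt0 // mul1r ler_ln ?posrE ?ler_nat //.
by rewrite ltr0n (leq_trans _ N2).
Qed.

Lemma exists_pow2_ge (t : R) : exists s : nat, t <= 2 ^+ s /\ s%:R <= 1 + logp t.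
Proof.
have [s t_le s_min] : exists2 s : nat, t <= 2 ^+ s & forall s', t <= 2 ^+ s' -> (s <= s')%nat.
  have ex : exists s : nat, t <= 2 ^+ s.
    exists (Num.Def.archi_bound t); case: (lerP t 0) => [t0|t0].
      by apply: le_trans t0 _; rewrite exprn_ge0.
    apply: le_trans (ltW (archi_boundP (ltW t0))) _.
    by rewrite -natrX ler_nat ltnW // ltn_expl.
  by case: (ex_minnP ex) => s; exists s.
exists s; split => //; case: s t_le s_min => [|s] t_le s_min.
  by have := logp_ge0 t; lra.
have st : 2 ^+ s < t by rewrite ltNge; apply/negP => /s_min; rewrite ltnn.
have t1 : 1 <= t by apply: le_trans (ltW st); rewrite exprn_ege1 //; lra.
by rewrite /logp t1 -natr1 addrC lerD2l ltW // log2_pow2_lt.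
Qed.

Lemma dyadic_scale N (v : R) : (2 <= N)%nat ->
  exists j : nat, [/\ N%:R <= 2 ^+ j.+1 :> R, v <= 2 ^+ j.+1 &
                      j.+1%:R <= 2 + log2 N%:R + logp v].
Proof.
move=> N2; have [s1 [N_le s1_le]] := exists_pow2_ge N%:R.
have [s2 [v_le s2_le]] := exists_pow2_ge v.
have s1_gt0 : (0 < s1)%nat.
  by case: s1 N_le {s1_le} => //; rewrite expr0 lern1 => /(leq_trans N2).
rewrite [logp _](_ : _ = log2 N%:R) in s1_le; last by rewrite /logp ler1n (leq_trans _ N2).
have ge1 s : 1 <= 2 ^+ s :> R by rewrite exprn_ege1 //; lra.
exists (s1 + s2).-1; rewrite prednK ?addn_gt0 ?s1_gt0 // exprD natrD.
by have := ge1 s1; have := ge1 s2; split; nra.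
Qed.

Lemma unit_ball_scaled (X : topologicalType) (F : set (X -> R)) nF f (r : R) :
  (forall a g, F g -> F (fun x => a * g x)) ->
  (forall a g, F g -> nF (fun x => a * g x) = `|a| * nF g) ->
  F f -> 0 < r -> nF f <= r -> unit_ball F nF (fun x => r^-1 * f x).
Proof.
move=> F_scale nF_scale Ff r_gt0 f_le; split; first exact: F_scale.
rewrite nF_scale // ger0_norm; last by rewrite invr_ge0 ltW.
by rewrite mulrC ler_pdivrMr // mul1r.
Qed.

Lemma finite_net_of_entropy (X : topologicalType) (A : set (X -> R)) f0 eps h :
  A f0 -> metric_entropy_is A eps h ->
  exists (k : nat) (g : nat -> X -> R), [/\ (0 < k)%nat,
    forall f, A f -> exists2 i, (i < k)%nat & forall x, `|f x - g i x| <= eps &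
    ln k%:R = h * ln 2].
Proof.
move=> A_f0 [k [[[g [_ g_net]] _] ->]].
exists k, (fun i => if insub i is Some i' then g i' else fun=> 0); split.
- by case: (g_net _ A_f0) => i _; exact: leq_ltn_trans (leq0n i) (ltn_ord i).
- move=> f /g_net[i f_near]; exists i; first exact: ltn_ord.
  by move=> x; rewrite valK.
- by rewrite log2E mulfVK // gt_eqF // ln2_gt0.
Qed.

Lemma dyadic_nets (X : topologicalType) (A : set (X -> R)) f0 (L : R) :
  A f0 ->
  (forall eps : R, 0 < eps -> eps <= 1 / 2 ->
     exists h : R, metric_entropy_is A eps h /\ h <= L * log2 (eps^-1)) ->
  exists (k : nat -> nat) (g : nat -> nat -> X -> R), [/\ forall j, (0 < k j)%nat,
    forall j f, A f -> exists2 i, (i < k j)%nat & forall x, `|f x - g j i x| <= (4 ^+ j.+1)^-1 &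
    forall j, ln (k j)%:R <= 2 * j.+1%:R * L * ln 2].
Proof.
move=> A_f0 entropy.
suff /choice[kg kg_net] : forall j, exists kg : nat * (nat -> X -> R), [/\ (0 < kg.1)%nat,
    forall f, A f -> exists2 i, (i < kg.1)%nat & forall x, `|f x - kg.2 i x| <= (4 ^+ j.+1)^-1 &
    ln kg.1%:R <= 2 * j.+1%:R * L * ln 2].
  by exists (fun j => (kg j).1), (fun j => (kg j).2); split => j; case: (kg_net j).
move=> j; have pow4_ge4 : 4 <= 4 ^+ j.+1 :> R.
  by rewrite exprS ler_peMr ?exprn_ege1 //; lra.
have eps_gt0 : 0 < (4 ^+ j.+1)^-1 :> R by rewrite invr_gt0 exprn_gt0.
have eps_le : (4 ^+ j.+1)^-1 <= 1 / 2 :> R.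
  by rewrite mul1r lef_pV2 ?posrE ?exprn_gt0 //; lra.
have [h [ent h_le]] := entropy _ eps_gt0 eps_le.
have [k [g [k_gt0 g_net ln_k]]] := finite_net_of_entropy A_f0 ent.
exists (k, g); split => //; rewrite ln_k.
have ln_pow4 : ln (4 ^+ j.+1) = 2 * j.+1%:R * @ln R 2.
  rewrite lnXn; last lra.
  rewrite (_ : 4 = 2 * 2); last by rewrite -natrM.
  by rewrite lnM ?posrE ?ltr0n // -[_ *+ j.+1]mulr_natr; ring.
move: h_le; rewrite invrK log2E ln_pow4 mulfK ?gt_eqF ?ln2_gt0 // => h_le.
by rewrite ler_pM2r ?ln2_gt0 //; lra.
Qed.

Lemma clip_scaled_net_loss (X : Type) (f g : X -> R) (r : R)
    (xs : nat -> X) (ys : nat -> R) N :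
  0 < r -> N%:R <= r -> (forall x, `|r^-1 * f x - g x| <= (r ^+ 2)^-1) ->
  (forall t, -1 <= ys t <= 1) ->
  \sum_(t < N) (ys t - clip (r * g (xs t))) ^+ 2 <=
  \sum_(t < N) (ys t - f (xs t)) ^+ 2 + 4.
Proof.
move=> r_gt0 N_le g_near ys_bound.
have near t : `|r * g (xs t) - f (xs t)| <= r^-1.
  rewrite -[r * _ - _]opprB -[f _](mulVKf (lt0r_neq0 r_gt0)) -mulrBr normrN normrM.
  rewrite gtr0_norm //.
  apply: le_trans (ler_wpM2l (ltW r_gt0) (g_near _)) _.
  by rewrite expr2 invfM mulVKf ?lt0r_neq0.
apply: (le_trans (y := \sum_(t < N) ((ys t - f (xs t)) ^+ 2 + 4 * r^-1))).
  apply: ler_sum => t _; apply: le_trans (clip_sqr_loss _ (f (xs t)) (ys_bound t)) _.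
  by rewrite lerD2l ler_pM2l // ltr0n.
rewrite big_split /= sumr_const card_ord lerD2l -[_ *+ N]mulr_natr -mulrA.
have : r^-1 * N%:R <= 1 by rewrite mulrC ler_pdivrMr // mul1r.
lra.
Qed.

Lemma regret_budget (l L S a b : R) :
  0 < l -> l <= 1 -> 1 <= L -> 0 <= S -> S <= 2 + a + b -> 1 <= a -> 0 <= b ->
  4 * (S - 1) + 4 + 16 * (S * l + 2 * S * L * l) <= 156 * L * (b + a).
Proof.
move=> l_gt0 l_le1 L_ge1 S_ge0 S_le a_ge1 b_ge0.
(* The left-hand side is at most 52 S L <= 52 L (2 + a + b) <= 52 L (3 a + b). *)
have SL_ge0 : 0 <= S * L by nra.
have : S * L * l <= S * L by nra.
have : S * l <= S by nra.
have : S <= S * L by nra.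
have : S * L <= (2 + a + b) * L by nra.
nra.
Qed.

Theorem mainTheorem7 :
  exists C : R,
  forall (X : topologicalType) (x0 : X)
         (F : set (X -> R)) (nF : (X -> R) -> R) (L : R),
    lin_subspace_CX F -> finite_dim F -> is_norm_on F nF ->
    1 <= L ->
    (forall eps : R, 0 < eps -> eps <= 1 / 2 ->
       exists h : R, metric_entropy_is (unit_ball F nF) eps h /\
                     h <= L * log2 (eps^-1)) ->
    exists S : strategy X,
      forall (N : nat) (f : X -> R) (xs : nat -> X) (ys : nat -> R),
        leq 2 N -> F f -> (forall n, -1 <= ys n <= 1) ->
        \sum_(n < N) (ys n - pred_move S xs ys n) ^+ 2
          <= \sum_(n < N) (ys n - f (xs n)) ^+ 2
             + C * L * (logp (nF f) + log2 N%:R).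
Proof.
exists 156 => X x0 F nF L [_ [F0 [_ F_scale]]] _ [nF_ge0 [_ [nF_scale _]]] L_ge1 entropy.
have ball_scaled := unit_ball_scaled F_scale nF_scale.
have [r0_gt0 r0_ge] : 0 < nF (fun=> 0) + 1 /\ nF (fun=> 0) <= nF (fun=> 0) + 1.
  by have := nF_ge0 _ F0; split; lra.
have ball_nonempty := ball_scaled _ _ F0 r0_gt0 r0_ge.
have [k [g [k_gt0 g_net ln_k]]] := dyadic_nets ball_nonempty entropy.
set expert := fun j i x => clip (2 ^+ j.+1 * g j i x).
exists (aggregating_strategy k expert x0) => N f xs ys N_ge2 Ff ys_bound.
under eq_bigr do rewrite pred_move_aggregating.
have [j [N_le f_le j_le]] := dyadic_scale (nF f) N_ge2.
have r_gt0 : 0 < 2 ^+ j.+1 :> R by rewrite exprn_gt0.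
have [i ik g_near] := g_net j _ (ball_scaled _ _ Ff r_gt0 f_le).
have regret :=
  aggregate_regret (expert := expert) k_gt0 (fun j i x => clip_bound _) xs N ys_bound ik.
have pow4 : 4 ^+ j.+1 = (2 ^+ j.+1) ^+ 2 :> R by rewrite -exprM mulnC exprM expr2 -natrM.
rewrite pow4 in g_near.
have clip_loss := clip_scaled_net_loss xs r_gt0 N_le g_near ys_bound.
have := regret_budget ln2_gt0 ln2_le1 L_ge1 (ler0n _ _) j_le (log2_nat_ge1 N_ge2) (logp_ge0 _).
by have := ln_k j; have := @natr1 R j; lra.
Qed.
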